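(* Let $U\subset\mathbb{R}^u\times\mathbb{R}^s$ be a convex neighborhood of zero and let $f:U\to\mathbb{R}^u\times\mathbb{R}^s$ be a $C^1$ map with $f(0)=0$. Suppose that for $M>0$, $m\left[\frac{\partial f_{\mathrm x}}{\partial\mathrm x}(U)\right]-M\sup_{z\in U}\left\|\frac{\partial f_{\mathrm x}}{\partial\mathrm y}(z)\right\|\ge\xi$, $\sup_{z\in U}\left\{\left\|\frac{\partial f_{\mathrm y}}{\partial\mathrm y}(z)\right\|+\frac1M\left\|\frac{\partial f_{\mathrm y}}{\partial\mathrm x}(z)\right\|\right\}\le\mu$, and $\xi/\mu>1$. Then $f(J_u(0,M)\cap U)\subset\mathrm{int}\,J_u(0,M)\cup\{0\}$, where $J_u(0,M)=\{(\mathrm x,\mathrm y)\in\mathbb{R}^u\times\mathbb{R}^s:\|\mathrm y\|\le M\|\mathrm x\|\}$.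
   Context: Points of $\mathbb{R}^u\times\mathbb{R}^s$ are written $(\mathrm x,\mathrm y)$, $f=(f_{\mathrm x},f_{\mathrm y})$, norms Euclidean. For a linear map $A$, $m(A)=\max\{c:\|Av\|\ge c\|v\|\ \forall v\}$; for a set $\mathbf A$ of matrices, $m(\mathbf A)=\inf_{A\in\mathbf A}m(A)$. $[\partial f_{\mathrm x}/\partial\mathrm x(U)]$ is the interval enclosure: the set of matrices whose $(i,j)$ entry lies in $[\inf_{U}\partial f_{\mathrm x,i}/\partial\mathrm x_j,\sup_U\partial f_{\mathrm x,i}/\partial\mathrm x_j]$. *)

From HB Require Import structures.
From mathcomp Require Import all_boot all_order all_algebra.
From mathcomp Require Import all_classical all_reals all_analysis.
Set Implicit Arguments. Unset Strict Implicit. Unset Printing Implicit Defensive.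
Import Order.TTheory GRing.Theory Num.Theory.
Import numFieldNormedType.Exports.
Local Open Scope classical_set_scope.
Local Open Scope ring_scope.

Section Defs.
Variable R : realType.

Definition enorm (m n : nat) (A : 'M[R]_(m, n)) : R :=
  Num.sqrt (\sum_(i < m) \sum_(j < n) A i j ^+ 2).

Definition opnorm (m n : nat) (A : 'M[R]_(m, n)) : \bar R :=
  ereal_sup [set (enorm (A *m v))%:E | v in [set v : 'cV[R]_n | enorm v <= 1]].

Definition mnorm (m n : nat) (A : 'M[R]_(m, n)) : \bar R :=
  ereal_sup [set c%:E | c in [set c : R | forall v : 'cV[R]_n,
                                          c * enorm v <= enorm (A *m v)]].

Definition m_set (m n : nat) (S : set 'M[R]_(m, n)) : \bar R :=
  ereal_inf [set mnorm A | A in S].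

(* Jacobian matrix of f at z in the usual orientation:
   jac f z i j = d f_i / d z_j (z).  The library's [jacobian f z] acts on row
   vectors (v *m jacobian f z), so we transpose it. *)
Definition jac (n : nat) (f : 'rV[R]_n -> 'rV[R]_n) (z : 'rV[R]_n)
  : 'M[R]_n := (jacobian f z)^T.

Definition enclosure (n : nat) (U : set 'rV[R]_n)
  (m' n' : nat) (Q : 'rV[R]_n -> 'M[R]_(m', n')) : set 'M[R]_(m', n') :=
  [set A | forall i j,
     (ereal_inf [set (Q z i j)%:E | z in U] <= (A i j)%:E)%E /\
     ((A i j)%:E <= ereal_sup [set (Q z i j)%:E | z in U])%E].

Definition convex (n : nat) (U : set 'rV[R]_n) :=
  forall a b (t : R), U a -> U b -> 0 <= t <= 1 -> U ((1 - t) *: a + t *: b).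

Definition C1_on (n : nat) (U : set 'rV[R]_n) (f : 'rV[R]_n -> 'rV[R]_n) :=
  (forall z, U z -> differentiable f z) /\
  (forall i j, {within U, continuous (fun z => jac f z i j)}).

Definition cone_u (u s : nat) (M : R) : set 'rV[R]_(u + s) :=
  [set z | enorm (rsubmx z) <= M * enorm (lsubmx z)].

End Defs.

From HB Require Import structures.
From mathcomp Require Import all_boot all_order all_algebra.
From mathcomp Require Import all_classical all_reals all_analysis.
From mathcomp Require Import ring lra.
Import Order.TTheory GRing.Theory Num.Theory.
Import numFieldNormedType.Exports.
Local Open Scope classical_set_scope.
Local Open Scope ring_scope.

(* Along the segment from 0 to z = (x, y) the mean value theorem gives
   f(z) = B z, where B is the average of Df(tz) over t in [0, 1].  The block
   B_xx of B lies in the interval enclosure of the partial derivatives, so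
   |f_x(z)| >= m |x| - (sup |df_x/dy|) |y| >= xi |x| because |y| <= M |x| in the
   cone; averaging the pointwise bound |C x + D y| <= (|D| + |C| / M) M |x| gives
   |f_y(z)| <= M mu |x|.  As mu < xi, f(z) satisfies |f_y| < M |f_x|, an open
   condition, unless x = 0, which in the cone forces z = 0. *)

Set Implicit Arguments. Unset Strict Implicit. Unset Printing Implicit Defensive.

Section EuclideanNorm.
Variable R : realType.

Lemma sumr_sqr_ge0 (I : finType) (a : I -> R) : 0 <= \sum_i a i ^+ 2.
Proof. by apply: sumr_ge0 => i _; exact: sqr_ge0. Qed.

Lemma sqrt_sumr_sqr_eq0 (I : finType) (a : I -> R) :
  Num.sqrt (\sum_i a i ^+ 2) = 0 -> forall i, a i = 0.
Proof.
move=> /eqP; rewrite sqrtr_eq0 => a_le0 i.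
have /eqP : \sum_i a i ^+ 2 = 0 by apply/le_anti; rewrite a_le0 sumr_sqr_ge0.
rewrite psumr_eq0 => [/allP /(_ i)|j _]; last exact: sqr_ge0.
by rewrite mem_index_enum sqrf_eq0 => /(_ isT) /eqP.
Qed.

Lemma cauchy_schwarz (I : finType) (a b : I -> R) :
  \sum_i a i * b i <= Num.sqrt (\sum_i a i ^+ 2) * Num.sqrt (\sum_i b i ^+ 2).
Proof.
have sqr_sum (c : I -> R) : Num.sqrt (\sum_i c i ^+ 2) ^+ 2 = \sum_i c i ^+ 2.
  by rewrite sqr_sqrtr // sumr_sqr_ge0.
set na := Num.sqrt _; set nb := Num.sqrt _.
have [nab0|nab_neq0] := eqVneq (na * nb) 0.
  rewrite nab0; move/eqP: nab0; rewrite mulf_eq0 => /orP[]/eqP/sqrt_sumr_sqr_eq0 h.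
  - by rewrite big1 // => i _; rewrite h mul0r.
  - by rewrite big1 // => i _; rewrite h mulr0.
have nab_gt0 : 0 < 2 * (na * nb).
  by rewrite mulr_gt0 // lt_def nab_neq0 mulr_ge0 ?sqrtr_ge0.
rewrite -(ler_pM2l nab_gt0) mulr_sumr.
have -> : 2 * (na * nb) * (na * nb) =
    \sum_i (nb ^+ 2 * a i ^+ 2 + na ^+ 2 * b i ^+ 2).
  by rewrite big_split /= -!mulr_sumr -(sqr_sum a) -(sqr_sum b) -/na -/nb; ring.
apply: ler_sum => i _; have := sqr_ge0 (nb * a i - na * b i); nra.
Qed.
End EuclideanNorm.

Section MatrixNorm.
Variables (R : realType) (m n : nat).
Implicit Types A B : 'M[R]_(m, n).

Lemma enorm_ge0 A : 0 <= enorm A.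
Proof. exact: sqrtr_ge0. Qed.

Lemma enorm_pairE A : enorm A = Num.sqrt (\sum_(p : 'I_m * 'I_n) A p.1 p.2 ^+ 2).
Proof. by rewrite /enorm pair_bigA. Qed.

Lemma enorm0 : enorm (0 : 'M[R]_(m, n)) = 0.
Proof. by rewrite enorm_pairE big1 ?sqrtr0 // => p _; rewrite mxE expr0n. Qed.

Lemma enorm0_eq0 A : enorm A = 0 -> A = 0.
Proof.
by rewrite enorm_pairE => /sqrt_sumr_sqr_eq0 A0; apply/matrixP => i j; rewrite mxE (A0 (i, j)).
Qed.

Lemma enormZ c A : enorm (c *: A) = `|c| * enorm A.
Proof.
rewrite !enorm_pairE -sqrtr_sqr -sqrtrM ?sqr_ge0 // mulr_sumr.
by congr Num.sqrt; apply: eq_bigr => p _; rewrite mxE exprMn.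
Qed.

Lemma enormN A : enorm (- A) = enorm A.
Proof. by rewrite -scaleN1r enormZ normrN1 mul1r. Qed.

Lemma enorm_tr A : enorm A^T = enorm A.
Proof.
by rewrite /enorm exchange_big; congr Num.sqrt; apply: eq_bigr => j _; apply: eq_bigr => i _; rewrite mxE.
Qed.

Lemma enorm_dot_le A B : \sum_i \sum_j A i j * B i j <= enorm A * enorm B.
Proof. by rewrite !enorm_pairE pair_bigA; exact: cauchy_schwarz. Qed.

Lemma enormD A B : enorm (A + B) <= enorm A + enorm B.
Proof.
have sqr_enorm C : enorm C ^+ 2 = \sum_i \sum_j C i j ^+ 2.
  by rewrite sqr_sqrtr // sumr_ge0 // => i _; rewrite sumr_ge0 // => j _; exact: sqr_ge0.
rewrite -[enorm A + _]ger0_norm ?addr_ge0 ?enorm_ge0 // -sqrtr_sqr ler_sqrt ?sqr_ge0 //.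
have -> : \sum_i \sum_j (A + B) i j ^+ 2 =
    enorm A ^+ 2 + 2 * (\sum_i \sum_j A i j * B i j) + enorm B ^+ 2.
  rewrite !sqr_enorm mulr_sumr -!big_split /=; apply: eq_bigr => i _.
  by rewrite mulr_sumr -!big_split /=; apply: eq_bigr => j _; rewrite mxE; ring.
have := enorm_dot_le A B; nra.
Qed.

End MatrixNorm.

Section OperatorNorms.
Variables (R : realType) (m n : nat).
Implicit Types A : 'M[R]_(m, n).

Lemma mnorm_le A c : (c%:E <= mnorm A)%E ->
  forall v : 'cV[R]_n, c * enorm v <= enorm (A *m v).
Proof.
move=> cA v; rewrite leNgt; apply/negP => Av_lt.
have v_gt0 : 0 < enorm v.
  rewrite lt_def enorm_ge0 andbT; apply: contraTneq Av_lt => ->.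
  by rewrite mulr0 -leNgt enorm_ge0.
suff : (mnorm A <= (enorm (A *m v) / enorm v)%:E)%E.
  by move=> /(le_trans cA); rewrite lee_fin ler_pdivlMr // leNgt Av_lt.
apply: ge_ereal_sup => _ [c' c'A <-]; rewrite lee_fin ler_pdivlMr //; exact: c'A.
Qed.

Lemma opnorm_le A r : (opnorm A <= r%:E)%E ->
  forall v : 'cV[R]_n, enorm (A *m v) <= r * enorm v.
Proof.
move=> Ar v; have [/enorm0_eq0 ->|v_neq0] := eqVneq (enorm v) 0.
  by rewrite mulmx0 !enorm0 mulr0.
have v_gt0 : 0 < enorm v by rewrite lt_def v_neq0 enorm_ge0.
have invv_ge0 : 0 <= (enorm v)^-1 by rewrite invr_ge0 enorm_ge0.
have : ((enorm (A *m ((enorm v)^-1 *: v)))%:E <= opnorm A)%E.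
  apply: ereal_sup_ubound; exists ((enorm v)^-1 *: v) => //=.
  by rewrite enormZ ger0_norm // mulVf.
move=> /le_trans /(_ Ar); rewrite lee_fin -scalemxAr enormZ ger0_norm //.
by rewrite mulrC ler_pdivrMr.
Qed.

Lemma opnorm_ge0 A : (0 <= opnorm A)%E.
Proof. by apply: ereal_sup_ubound; exists 0; rewrite /= ?mulmx0 enorm0. Qed.

End OperatorNorms.

Lemma linear_entryE (R : comPzRingType) m n p q (L : {linear 'M[R]_(m, n) -> 'M[R]_(p, q)})
    (A : 'M[R]_(m, n)) i j :
  L A i j = \sum_k \sum_l L (delta_mx k l) i j * A k l.
Proof.
rewrite {1}[A]matrix_sum_delta linear_sum summxE; apply: eq_bigr => k _.
rewrite linear_sum summxE; apply: eq_bigr => l _.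
by rewrite linearZ mxE mulrC.
Qed.

Section UnitIntervalIntegral.
Variable R : realType.
Local Notation I01 := [set` `[(0 : R), 1]].

Definition continuous01 (g : R -> R) := {within I01, continuous g}.

Definition int01 (g : R -> R) : R := \int[lebesgue_measure]_(t in I01) g t.

Lemma continuous01_integrable g :
  continuous01 g -> lebesgue_measure.-integrable I01 (EFin \o g).
Proof. by move=> cg; apply: continuous_compact_integrable => //; exact: segment_compact. Qed.

Lemma continuous01_cst c : continuous01 (fun=> c).
Proof. by move=> x; exact: cvg_cst. Qed.

Lemma continuous01D f g :
  continuous01 f -> continuous01 g -> continuous01 (fun t => f t + g t).
Proof. by move=> cf cg x; apply: cvgD; [exact: cf|exact: cg]. Qed.

Lemma continuous01M f g :
  continuous01 f -> continuous01 g -> continuous01 (fun t => f t * g t).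
Proof. by move=> cf cg x; apply: cvgM; [exact: cf|exact: cg]. Qed.

Lemma continuous01_sum (I : Type) (r : seq I) (F : I -> R -> R) :
  (forall i, continuous01 (F i)) -> continuous01 (fun t => \sum_(i <- r) F i t).
Proof.
move=> cF; elim: r => [|i r IHr].
  by under eq_fun do rewrite big_nil; exact: continuous01_cst.
by under eq_fun do rewrite big_cons; exact: continuous01D.
Qed.

Lemma int01_cst c : int01 (fun=> c) = c.
Proof.
by rewrite /int01 Rintegral_cst // [X in fine X]lebesgue_measure_itv /= lte_fin ltr01 /= subr0 mulr1.
Qed.

Lemma int01D f g : continuous01 f -> continuous01 g ->
  int01 (fun t => f t + g t) = int01 f + int01 g.
Proof. by move=> cf cg; rewrite /int01 RintegralD //; exact: continuous01_integrable. Qed.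

Lemma int01Z c f : continuous01 f -> int01 (fun t => c * f t) = c * int01 f.
Proof. by move=> cf; rewrite /int01 RintegralZl //; exact: continuous01_integrable. Qed.

Lemma int01_sum (I : Type) (r : seq I) (F : I -> R -> R) :
  (forall i, continuous01 (F i)) ->
  int01 (fun t => \sum_(i <- r) F i t) = \sum_(i <- r) int01 (F i).
Proof.
move=> cF; elim: r => [|i r IHr].
  by rewrite big_nil; under eq_fun do rewrite big_nil; exact: int01_cst.
rewrite big_cons -IHr -int01D //; last exact: continuous01_sum.
by under eq_fun do rewrite big_cons.
Qed.

Lemma int01_le f g : continuous01 f -> continuous01 g ->
  (forall t, 0 <= t <= 1 -> f t <= g t) -> int01 f <= int01 g.
Proof.
by move=> cf cg fg; apply: le_Rintegral => //; exact: continuous01_integrable.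
Qed.

Lemma int01_ge_ereal (e : \bar R) g : continuous01 g ->
  (forall t, 0 <= t <= 1 -> (e <= (g t)%:E)%E) -> (e <= (int01 g)%:E)%E.
Proof.
move=> cg eg; case: e eg => [r| |] eg.
- rewrite lee_fin -[r]int01_cst; apply: int01_le => [||t /eg]; rewrite ?lee_fin //.
  exact: continuous01_cst.
- by have := eg 0; rewrite lexx ler01 leye_eq => /(_ isT).
- exact: leNye.
Qed.

Lemma int01_le_ereal (e : \bar R) g : continuous01 g ->
  (forall t, 0 <= t <= 1 -> ((g t)%:E <= e)%E) -> ((int01 g)%:E <= e)%E.
Proof.
move=> cg ge; case: e ge => [r| |] ge.
- rewrite lee_fin -[r]int01_cst; apply: int01_le => [||t /ge]; rewrite ?lee_fin //.
  exact: continuous01_cst.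
- exact: leey.
- by have := ge 0; rewrite lexx ler01 leeNy_eq => /(_ isT).
Qed.

Lemma int01_derive (F g : R -> R) : continuous01 g ->
  (forall t, 0 < t < 1 -> derivable F t 1 /\ derive1 F t = g t) ->
  {for 0, continuous F} -> {for 1, continuous F} -> int01 g = F 1 - F 0.
Proof.
move=> cg dF cF0 cF1.
rewrite /int01 /Rintegral (@continuous_FTC2 _ g F 0 1 ltr01 cg) //.
- split; first by move=> t; rewrite in_itv /= => /dF[].
  + exact: cvg_at_right_filter.
  + exact: cvg_at_left_filter.
- by move=> t; rewrite in_itv /= => /dF[].
Qed.

End UnitIntervalIntegral.

Section MatrixIntegral.
Variable R : realType.

Definition continuous01mx m n (G : R -> 'M[R]_(m, n)) :=
  forall i j, continuous01 (fun t => G t i j).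

Definition int01mx m n (G : R -> 'M[R]_(m, n)) : 'M[R]_(m, n) :=
  \matrix_(i, j) int01 (fun t => G t i j).

Lemma continuous01mx_linear m n p q (L : {linear 'M[R]_(m, n) -> 'M[R]_(p, q)}) G :
  continuous01mx G -> continuous01mx (fun t => L (G t)).
Proof.
move=> cG i j; under eq_fun do rewrite linear_entryE.
apply: continuous01_sum => k; apply: continuous01_sum => l.
by apply: continuous01M; [exact: continuous01_cst|exact: cG].
Qed.

Lemma int01mx_linear m n p q (L : {linear 'M[R]_(m, n) -> 'M[R]_(p, q)}) G :
  continuous01mx G -> L (int01mx G) = int01mx (fun t => L (G t)).
Proof.
move=> cG; have cLG k l i j :
    continuous01 (fun t => L (delta_mx k l) i j * G t k l).
  by apply: continuous01M; [exact: continuous01_cst|exact: cG].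
apply/matrixP => i j; rewrite linear_entryE !mxE.
rewrite (_ : (fun t => L (G t) i j) =
    fun t => \sum_k \sum_l L (delta_mx k l) i j * G t k l); last first.
  by apply: funext => t; rewrite linear_entryE.
rewrite int01_sum => [|k]; last exact: continuous01_sum.
apply: eq_bigr => k _; rewrite int01_sum //; apply: eq_bigr => l _.
by rewrite int01Z // mxE.
Qed.

Lemma enorm_int01mx_le m n (G : R -> 'M[R]_(m, n)) K : continuous01mx G ->
  (forall t, 0 <= t <= 1 -> enorm (G t) <= K) -> enorm (int01mx G) <= K.
Proof.
move=> cG GK; set v := int01mx G.
have cvG i : continuous01 (fun t => \sum_j v i j * G t i j).
  by apply: continuous01_sum => j; by apply: continuous01M; [exact: continuous01_cst|exact: cG].
(* [|v|^2 = <v, int G> = int <v, G t> <= |v| K] *)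
have : enorm v ^+ 2 <= enorm v * K.
  have -> : enorm v ^+ 2 = int01 (fun t => \sum_i \sum_j v i j * G t i j).
    rewrite sqr_sqrtr; last by apply: sumr_ge0 => i _; exact: sumr_sqr_ge0.
    rewrite int01_sum //; apply: eq_bigr => i _; rewrite int01_sum => [|j]; last first.
      by apply: continuous01M; [exact: continuous01_cst|exact: cG].
    by apply: eq_bigr => j _; rewrite int01Z // {2}/v mxE expr2.
  rewrite -[_ * K]int01_cst; apply: int01_le => [||t t01].
  - exact: continuous01_sum.
  - exact: continuous01_cst.
  by apply: le_trans (enorm_dot_le _ _) _; rewrite ler_wpM2l ?enorm_ge0 ?GK.
have [->|v_neq0] := eqVneq (enorm v) 0; last first.
  by rewrite expr2 ler_pM2l // lt_def v_neq0 enorm_ge0.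
by rewrite (le_trans (enorm_ge0 (G 0))) // GK // lexx ler01.
Qed.

Lemma int01mx_enclosure n (U : set 'rV[R]_n) p q (Q : 'rV[R]_n -> 'M[R]_(p, q))
    (g : R -> 'rV[R]_n) :
  (forall t, 0 <= t <= 1 -> U (g t)) -> continuous01mx (fun t => Q (g t)) ->
  enclosure U Q (int01mx (fun t => Q (g t))).
Proof.
move=> gU cQ i j; rewrite mxE; split.
- by apply: int01_ge_ereal => // t t01; apply: ereal_inf_lbound; exists (g t); [exact: gU|].
- by apply: int01_le_ereal => // t t01; apply: ereal_sup_ubound; exists (g t); [exact: gU|].
Qed.

End MatrixIntegral.

Lemma continuous_within_comp (T1 T2 T3 : topologicalType) (A : set T1) (B : set T2)
    (p : T1 -> T2) (h : T2 -> T3) :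
  {within B, continuous h} -> continuous p -> (forall x, A x -> B (p x)) ->
  {within A, continuous (h \o p)}.
Proof.
move=> ch cp pAB; apply/subspace_continuousP => x Ax.
apply: cvg_comp ((subspace_continuousP _ h).1 ch (p x) (pAB x Ax)).
move=> W /=; rewrite !nbhs_simpl /within /= => /(cp x).
by rewrite nbhs_simpl /=; apply: filterS => t Bt At; apply: Bt; exact: pAB.
Qed.

Section Segment.
Variables (R : realType) (n : nat).
Implicit Types (f : 'rV[R]_n -> 'rV[R]_n) (z : 'rV[R]_n).

Lemma continuous01mx_line (U : set 'rV[R]_n) p q (Q : 'rV[R]_n -> 'M[R]_(p, q)) z :
  (forall i j, {within U, continuous (fun w => Q w i j)}) ->
  (forall t, 0 <= t <= 1 -> U (t *: z)) -> continuous01mx (fun t => Q (t *: z)).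
Proof.
move=> cQ zU i j; apply: (continuous_within_comp (cQ i j) (@scalel_continuous R _ z)).
by move=> t; rewrite /= in_itv /=; exact: zU.
Qed.

Lemma derive1_line f z (k : 'I_n) (t : R) : differentiable f (t *: z) ->
  [/\ derivable (fun s : R => f (s *: z) 0 k) t 1,
      derive1 (fun s : R => f (s *: z) 0 k) t = (jac f (t *: z) *m z^T) k 0 &
      {for t, continuous (fun s : R => f (s *: z) 0 k)}].
Proof.
move=> df.
have dz : 'd (fun s : R => s *: z) t = (fun s : R => s *: z) :> (R -> _).
  by rewrite diff_val.
have dfz : differentiable (f \o (fun s : R => s *: z)) t.
  exact: differentiable_comp.
have dfzk : differentiable ((fun w : 'rV[R]_n => w 0 k) \o (f \o (fun s => s *: z))) t.
  by apply: differentiable_comp => //; exact: differentiable_coord.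
split; [exact: diff_derivable| |exact: differentiable_continuous].
have @coord : {linear 'rV[R]_n -> R}.
  by exists (fun w : 'rV[R]_n => w 0 k); do 2![eexists]; do ?[constructor];
     rewrite ?mxE// => ? *; rewrite ?mxE//; move=> ?; rewrite !mxE.
have coord_cont : continuous coord by exact: coord_continuous.
rewrite derive1E deriveE //.
rewrite (_ : (fun s => f (s *: z) 0 k) = coord \o (f \o (fun s => s *: z))) //.
rewrite diff_comp //; last by apply: linear_differentiable.
rewrite /= (diff_lin _ coord_cont) /= diff_comp //= dz /= scale1r.
rewrite -deriveE // deriveEjacobian // !mxE; apply: eq_bigr => j _.
by rewrite /jac /jacobian !mxE mulrC.
Qed.

Lemma mean_value_line f z :
  (forall t, 0 <= t <= 1 -> differentiable f (t *: z)) ->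
  continuous01mx (fun t => jac f (t *: z)) ->
  (f z - f 0)^T = int01mx (fun t => jac f (t *: z)) *m z^T.
Proof.
move=> df cJ; rewrite -[_ *m z^T]/(mulmxr z^T _) int01mx_linear //.
apply/matrixP => k l; rewrite ord1 !mxE.
have [] // := derive1_line k (df 0 _); first by rewrite lexx ler01.
have [] // := derive1_line k (df 1 _); first by rewrite lexx ler01.
move=> _ _ cf1 _ _ cf0.
rewrite (@int01_derive _ (fun t => f (t *: z) 0 k)) ?scale1r ?scale0r //.
- exact: (continuous01mx_linear (L := mulmxr z^T) cJ).
- move=> t /andP[t_gt0 t_lt1].
  by have [] // := derive1_line k (df t _); rewrite !ltW.
Qed.

End Segment.

Lemma usubmx_mul (R : pzSemiRingType) m1 m2 n1 n2 p (A : 'M[R]_(m1 + m2, n1 + n2))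
    (w : 'M[R]_(n1 + n2, p)) :
  usubmx (A *m w) = ulsubmx A *m usubmx w + ursubmx A *m dsubmx w.
Proof. by rewrite -mul_usub_mx -{1}[usubmx A]hsubmxK -{1}[w]vsubmxK mul_row_col. Qed.

Lemma dsubmx_mul (R : pzSemiRingType) m1 m2 n1 n2 p (A : 'M[R]_(m1 + m2, n1 + n2))
    (w : 'M[R]_(n1 + n2, p)) :
  dsubmx (A *m w) = dlsubmx A *m usubmx w + drsubmx A *m dsubmx w.
Proof. by rewrite -mul_dsub_mx -{1}[dsubmx A]hsubmxK -{1}[w]vsubmxK mul_row_col. Qed.

Section ExtendedRealBounds.
Variable R : realType.

Lemma ereal_sub_mul_ge (a S : \bar R) (M xi : R) : 0 < M -> (0 <= S)%E ->
  (xi%:E <= a - M%:E * S)%E -> exists2 r, S = r%:E & ((xi + M * r)%:E <= a)%E.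
Proof.
move=> M_gt0; case: S => [r| |] // _.
- by exists r; rewrite // EFinD EFinM -leeBrDr.
- by rewrite gt0_muley ?lte_fin // addeNy leeNy_eq.
Qed.

Lemma ereal_add_mul_le (a b : \bar R) (k mu : R) : (0 <= a)%E -> (0 <= b)%E -> 0 < k ->
  (a + k%:E * b <= mu%:E)%E -> exists d c, [/\ a = d%:E, b = c%:E & d + k * c <= mu].
Proof.
move=> + + k_gt0; case: a => [d| |] //; case: b => [c| |] //= _ _.
- by exists d, c; rewrite -lee_fin EFinD EFinM.
- by rewrite gt0_muley ?lte_fin // addey.
- by rewrite gt0_muley ?lte_fin // addye.
Qed.

End ExtendedRealBounds.

Lemma enorm_linear_int01mx_le (R : realType) m n p q
    (L : {linear 'M[R]_(m, n) -> 'M[R]_(p, q)}) G K : continuous01mx G ->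
  (forall t, 0 <= t <= 1 -> enorm (L (G t)) <= K) -> enorm (L (int01mx G)) <= K.
Proof.
move=> cG LGK; rewrite int01mx_linear //.
by apply: enorm_int01mx_le => //; exact: continuous01mx_linear.
Qed.

Section ConeEstimates.
Variables (R : realType) (u s : nat) (J : R -> 'M[R]_(u + s)) (w : 'cV[R]_(u + s)).
Variable M : R.
Hypotheses (cJ : continuous01mx J) (w_cone : enorm (dsubmx w) <= M * enorm (usubmx w)).
Let B := int01mx J.

Lemma enorm_usubmx_int01mx_ge (xi r : R) :
  (forall t, 0 <= t <= 1 -> (opnorm (ursubmx (J t)) <= r%:E)%E) ->
  ((xi + M * r)%:E <= mnorm (ulsubmx B))%E ->
  xi * enorm (usubmx w) <= enorm (usubmx (B *m w)).
Proof.
move=> urJ ulB.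
have r_ge0 : 0 <= r.
  by rewrite -lee_fin (le_trans (opnorm_ge0 _) (urJ 0 _)) // lexx ler01.
have urB : enorm (ursubmx B *m dsubmx w) <= r * enorm (dsubmx w).
  apply: (enorm_linear_int01mx_le (L := mulmxr (dsubmx w) \o rsubmx \o usubmx)) => //.
  by move=> t t01; exact: opnorm_le (urJ t t01) _.
have := mnorm_le ulB (usubmx w).
have := enormD (usubmx (B *m w)) (- (ursubmx B *m dsubmx w)).
rewrite enormN usubmx_mul addrK.
have : r * enorm (dsubmx w) <= r * (M * enorm (usubmx w)) by rewrite ler_wpM2l.
nra.
Qed.

Lemma enorm_dsubmx_int01mx_le (mu : R) : 0 < M ->
  (forall t, 0 <= t <= 1 ->
     (opnorm (drsubmx (J t)) + (M^-1)%:E * opnorm (dlsubmx (J t)) <= mu%:E)%E) ->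
  enorm (dsubmx (B *m w)) <= M * mu * enorm (usubmx w).
Proof.
move=> M_gt0 dJ.
apply: (enorm_linear_int01mx_le (L := dsubmx \o mulmxr w)) => // t t01.
have Minv_gt0 : 0 < M^-1 by rewrite invr_gt0.
have [d [c [dE cE dc_mu]]] :=
  ereal_add_mul_le (opnorm_ge0 _) (opnorm_ge0 _) Minv_gt0 (dJ t t01).
have d_ge0 : 0 <= d by rewrite -lee_fin -dE opnorm_ge0.
have dlJ : (opnorm (dlsubmx (J t)) <= c%:E)%E by rewrite cE.
have drJ : (opnorm (drsubmx (J t)) <= d%:E)%E by rewrite dE.
rewrite /= dsubmx_mul; apply: le_trans (enormD _ _) _.
have := opnorm_le dlJ (usubmx w); have := opnorm_le drJ (dsubmx w).
have : d * enorm (dsubmx w) <= d * (M * enorm (usubmx w)) by rewrite ler_wpM2l.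
have : c * enorm (usubmx w) = M * (M^-1 * c) * enorm (usubmx w).
  by rewrite mulrA divff ?mul1r ?gt_eqF.
have : 0 <= M * enorm (usubmx w) * (mu - (d + M^-1 * c)).
  by rewrite !mulr_ge0 ?enorm_ge0 ?subr_ge0 // ltW.
lra.
Qed.

End ConeEstimates.

Lemma enorm_continuous (R : realType) (T : topologicalType) m n (g : T -> 'M[R]_(m, n)) :
  (forall i j, continuous (fun x => g x i j)) -> continuous (fun x => enorm (g x)).
Proof.
move=> cg x; apply: (continuous_comp _ (@sqrt_continuous R _)).
apply: continuous_big => [|i _]; first exact: add_continuous.
apply: continuous_big => [|j _]; first exact: add_continuous.
under eq_fun do rewrite expr2.
by move=> y; exact: cvgM (cg i j y) (cg i j y).
Qed.

Lemma cone_u_interior (R : realType) u s (M : R) (z : 'rV[R]_(u + s)) :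
  enorm (rsubmx z) < M * enorm (lsubmx z) -> interior (cone_u M) z.
Proof.
pose phi (w : 'rV[R]_(u + s)) := M * enorm (lsubmx w) - enorm (rsubmx w).
have cl : continuous (fun w : 'rV[R]_(u + s) => enorm (lsubmx w)).
  apply: enorm_continuous => i j.
  rewrite (_ : (fun w : 'rV[R]_(u + s) => lsubmx w i j) = fun w => w i (lshift s j)).
    exact: coord_continuous.
  by apply: funext => w; rewrite mxE.
have cr : continuous (fun w : 'rV[R]_(u + s) => enorm (rsubmx w)).
  apply: enorm_continuous => i j.
  rewrite (_ : (fun w : 'rV[R]_(u + s) => rsubmx w i j) = fun w => w i (rshift u j)).
    exact: coord_continuous.
  by apply: funext => w; rewrite mxE.
have cphi : continuous phi by move=> w; exact: cvgB (cvgM (cvg_cst M) (cl w)) (cr w).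
move=> z_in; rewrite /interior /=.
have phi_gt0 : 0 < phi z by rewrite subr_gt0.
have : nbhs z [set w | 0 < phi w].
  by apply: (cvgr_gt _ (cphi z) _ phi_gt0); exact: nbhs_filter.
by apply: filterS => w; rewrite /cone_u /phi /= subr_gt0 => /ltW.
Qed.

Lemma cone_u_lsubmx_eq0 (R : realType) u s (M : R) (z : 'rV[R]_(u + s)) :
  cone_u M z -> enorm (lsubmx z) = 0 -> z = 0.
Proof.
move=> z_cone x0; have y0 : enorm (rsubmx z) = 0.
  by apply/le_anti; rewrite enorm_ge0 andbT; move: z_cone; rewrite /cone_u /= x0 mulr0.
by rewrite -[z]hsubmxK (enorm0_eq0 x0) (enorm0_eq0 y0) row_mx0.
Qed.

Section ConeImage.
Variables (R : realType) (u s : nat) (U : set 'rV[R]_(u + s)).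
Variables (f : 'rV[R]_(u + s) -> 'rV[R]_(u + s)) (M : R) (z : 'rV[R]_(u + s)).
Hypotheses (f0 : f 0 = 0) (f_C1 : C1_on U f).
Hypotheses (segU : forall t, 0 <= t <= 1 -> U (t *: z)) (z_cone : cone_u M z).

Let J t := jac f (t *: z).

Let cJ : continuous01mx J.
Proof. exact: continuous01mx_line f_C1.2 segU. Qed.

Let fzE : (f z)^T = int01mx J *m z^T.
Proof.
by rewrite -(mean_value_line (fun t t01 => f_C1.1 _ (segU t01)) cJ) f0 subr0.
Qed.

Let z_cone_tr : enorm (dsubmx z^T) <= M * enorm (usubmx z^T).
Proof. by rewrite -trmx_rsub -trmx_lsub !enorm_tr. Qed.

Lemma enorm_lsubmx_f_ge xi : 0 < M ->
  (m_set (enclosure U (fun w => ulsubmx (jac f w)))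
     - M%:E * ereal_sup [set opnorm (ursubmx (jac f w)) | w in U] >= xi%:E)%E ->
  xi * enorm (lsubmx z) <= enorm (lsubmx (f z)).
Proof.
move=> M_gt0 hxi.
have S_ge0 : (0 <= ereal_sup [set opnorm (ursubmx (jac f w)) | w in U])%E.
  apply: le_trans (opnorm_ge0 (ursubmx (jac f 0))) _.
  apply: ereal_sup_ubound; exists 0 => //.
  by rewrite -(scale0r z); apply: segU; rewrite lexx ler01.
have [r Sr hr] := ereal_sub_mul_ge M_gt0 S_ge0 hxi.
rewrite -!(enorm_tr (lsubmx _)) !trmx_lsub fzE.
apply: (enorm_usubmx_int01mx_ge cJ z_cone_tr (r := r)) => [t t01|].
  by rewrite -Sr; apply: ereal_sup_ubound; exists (t *: z); [exact: segU|].
apply: (le_trans hr); apply: ereal_inf_lbound; exists (ulsubmx (int01mx J)) => //.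
have -> : ulsubmx (int01mx J) = int01mx (fun t => ulsubmx (J t)).
  exact: (int01mx_linear (lsubmx \o usubmx)).
exact: (int01mx_enclosure segU (continuous01mx_linear (L := lsubmx \o usubmx) cJ)).
Qed.

Lemma enorm_rsubmx_f_le mu : 0 < M ->
  (ereal_sup [set (opnorm (drsubmx (jac f w))
                   + (M^-1)%:E * opnorm (dlsubmx (jac f w)))%E | w in U] <= mu%:E)%E ->
  enorm (rsubmx (f z)) <= M * mu * enorm (lsubmx z).
Proof.
move=> M_gt0 hmu; rewrite -(enorm_tr (rsubmx _)) -(enorm_tr (lsubmx _)).
rewrite trmx_rsub trmx_lsub fzE.
apply: (enorm_dsubmx_int01mx_le cJ z_cone_tr M_gt0) => t t01.
by apply: le_trans hmu; apply: ereal_sup_ubound; exists (t *: z); [exact: segU|].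
Qed.

End ConeImage.

Theorem theorem4p1 (R : realType) (u s : nat)
  (U : set 'rV[R]_(u + s)) (f : 'rV[R]_(u + s) -> 'rV[R]_(u + s))
  (M xi mu : R) :
  convex U -> nbhs (0 : 'rV[R]_(u + s)) U ->
  C1_on U f -> f 0 = 0 ->
  0 < M ->
  (m_set (enclosure U (fun z => ulsubmx (jac f z)))
     - M%:E * ereal_sup [set opnorm (ursubmx (jac f z)) | z in U]
     >= xi%:E)%E ->
  (ereal_sup [set (opnorm (drsubmx (jac f z))
                   + (M^-1)%:E * opnorm (dlsubmx (jac f z)))%E | z in U]
     <= mu%:E)%E ->
  xi / mu > 1 ->
  f @` (@cone_u R u s M `&` U) `<=` interior (@cone_u R u s M) `|` [set 0].
Proof.
move=> convU /nbhs_singleton U0 f_C1 f0 M_gt0 hxi hmu xi_mu _ [z [z_cone zU] <-].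
have segU t : 0 <= t <= 1 -> U (t *: z).
  by move=> t01; have := convU 0 z t U0 zU t01; rewrite scaler0 add0r.
have [x0|x_neq0] := eqVneq (enorm (lsubmx z)) 0.
  by right; rewrite /= (cone_u_lsubmx_eq0 z_cone x0) f0.
left; apply: cone_u_interior.
have mu_ge0 : 0 <= mu.
  rewrite -lee_fin; apply: le_trans hmu; apply: le_trans (ereal_sup_ubound _); last first.
    by exists 0.
  by rewrite adde_ge0 ?mule_ge0 ?opnorm_ge0 // lee_fin invr_ge0 ltW.
have mu_lt_xi : mu < xi.
  move: xi_mu; have [->|mu_neq0] := eqVneq mu 0; first by rewrite invr0 mulr0 ltr10.
  by rewrite ltr_pdivlMr ?mul1r // lt_def mu_neq0.
have x_gt0 : 0 < enorm (lsubmx z) by rewrite lt_def x_neq0 enorm_ge0.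
have := enorm_lsubmx_f_ge f0 f_C1 segU z_cone M_gt0 hxi.
have := enorm_rsubmx_f_le f0 f_C1 segU z_cone M_gt0 hmu.
have : M * (mu * enorm (lsubmx z)) < M * (xi * enorm (lsubmx z)).
  by rewrite ltr_pM2l // ltr_pM2r.
nra.
Qed.
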